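(* Let $1\le k\le n-1$. If $\lambda\in\Gamma^+_k\subset\mathbb R^n$ and $\lambda_i\le0$ for some index $i$, then $$\sum_{j\ne i}\frac{\partial\sigma_k(\lambda)}{\partial\lambda_j}\ \le\ (n-k)\,\frac{\partial\sigma_k(\lambda)}{\partial\lambda_i}.$$
   Context: $\sigma_k(\lambda)=\sum_{i_1<\dots<i_k}\lambda_{i_1}\cdots\lambda_{i_k}$ is the $k$-th elementary symmetric function; $\Gamma^+_k=\{\lambda\in\mathbb R^n:\sigma_j(\lambda)>0,\ 1\le j\le k\}$. *)

From mathcomp Require Import all_boot all_order all_algebra.
From mathcomp Require Import mpoly.
Set Implicit Arguments. Unset Strict Implicit. Unset Printing Implicit Defensive.
Import Order.TTheory GRing.Theory Num.Theory.
Local Open Scope ring_scope.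

Definition sigma {R : realFieldType} {n : nat} (k : nat) (lam : 'I_n -> R) : R :=
  (mesym n R k).@[lam].

Definition dsigma {R : realFieldType} {n : nat} (k : nat) (i : 'I_n)
    (lam : 'I_n -> R) : R :=
  ((mesym n R k)^`M(i)).@[lam].

Definition GammaPlus {R : realFieldType} {n : nat} (k : nat) (lam : 'I_n -> R) : Prop :=
  forall j : nat, (1 <= j)%N -> (j <= k)%N -> 0 < sigma j lam.

From mathcomp Require Import all_boot all_order all_algebra.
From mathcomp Require Import mpoly.
From mathcomp Require Import lra zify.
Set Implicit Arguments. Unset Strict Implicit.
Import Order.TTheory GRing.Theory Num.Theory.
Local Open Scope ring_scope.

(* Write [s_m(λ|j)] for [s_m] of [λ] with the entry [λ_j] deleted.  Then
   [∂s_k/∂λ_j = s_(k-1)(λ|j)], every [m]-subset avoids exactly [n - m]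
   indices, so [Σ_j s_(k-1)(λ|j) = (n-k+1) s_(k-1)(λ)], and
   [s_(k-1)(λ) = s_(k-1)(λ|i) + λ_i s_(k-2)(λ|i)].  Peeling [λ_i] off
   [s_m(λ) > 0] shows inductively that [s_m(λ|i) > 0] for [m <= k] when
   [λ_i <= 0]; hence [s_(k-1)(λ) <= s_(k-1)(λ|i)], and
   [Σ_(j != i) s_(k-1)(λ|j) = (n-k+1) s_(k-1)(λ) - s_(k-1)(λ|i) <= (n-k) s_(k-1)(λ|i)]. *)

Lemma prod_expr_mem (R : comNzSemiRingType) (T : finType) (a : T -> R) (A : {set T}) :
  \prod_x a x ^+ (x \in A) = \prod_(x in A) a x.
Proof. by rewrite [RHS]big_mkcond; apply: eq_bigr => x _; case: (x \in A). Qed.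

Lemma sum_card_mem_setU1 (V : nmodType) (T : finType) (x : T) m (F : {set T} -> V) :
  \sum_(A : {set T} | (#|A| == m.+1) && (x \in A)) F A =
  \sum_(A : {set T} | (x \notin A) && (#|A| == m)) F (x |: A).
Proof.
rewrite (reindex_onto (fun A => x |: A) (fun A => A :\ x)) /=; last first.
  by move=> A /andP[_ xA]; rewrite setD1K.
apply: eq_bigl => A; rewrite setU11 andbT.
have [xA|xNA] /= := boolP (x \in A); last first.
  by rewrite setU1K // eqxx andbT cardsU1 xNA.
by apply/negbTE/negP => /andP[_ /eqP AxE]; move: xA; rewrite -AxE setD11.
Qed.

Lemma GammaPlusW (R : realFieldType) (n j k : nat) (lam : 'I_n -> R) :
  (j <= k)%N -> GammaPlus k lam -> GammaPlus j lam.
Proof. by move=> jk Gk l l1 lj; apply: Gk => //; apply: leq_trans jk. Qed.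

Section ElementarySymmetric.
Variables (R : realFieldType) (n : nat) (lam : 'I_n -> R).

Definition elem_sym (m : nat) : R :=
  \sum_(A : {set 'I_n} | #|A| == m) \prod_(x in A) lam x.

Definition elem_sym_omit (i : 'I_n) (m : nat) : R :=
  \sum_(A : {set 'I_n} | (i \notin A) && (#|A| == m)) \prod_(x in A) lam x.

Lemma sigma_elem_sym m : sigma m lam = elem_sym m.
Proof.
rewrite /sigma mesymE (big_morph _ (mevalD lam) (meval0 lam)).
apply: eq_bigr => A _; rewrite mevalX -prod_expr_mem.
by apply: eq_bigr => x _; rewrite mnmE.
Qed.

Lemma dsigma_elem_sym_omit j m : dsigma m.+1 j lam = elem_sym_omit j m.
Proof.
rewrite /dsigma mesymE (big_morph _ (@mderivD _ _ j) (@mderiv0 _ _ j)).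
rewrite (big_morph _ (mevalD lam) (meval0 lam)).
rewrite (bigID (fun A : {set 'I_n} => j \in A)) /= [X in _ + X]big1 ?addr0; last first.
  by move=> A /andP[_ jNA]; rewrite mderivX mnmE (negbTE jNA) scale0r meval0.
rewrite sum_card_mem_setU1; apply: eq_bigr => A /andP[jNA _].
rewrite mderivX mnmE setU11 scale1r mevalX -prod_expr_mem.
apply: eq_bigr => x _; rewrite mnmBE /mesym1 !mnmE in_setU1.
by case: (eqVneq x j) => [->|_] /=; rewrite ?(negbTE jNA) ?subn0.
Qed.

Lemma elem_sym0 : elem_sym 0 = 1.
Proof.
rewrite /elem_sym (big_pred1 set0) ?big_set0 // => A.
by rewrite cards_eq0.
Qed.

Lemma elem_sym_omit0 i : elem_sym_omit i 0 = 1.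
Proof.
rewrite /elem_sym_omit (big_pred1 set0) ?big_set0 // => A.
by rewrite cards_eq0 /=; case: eqVneq => [->|_]; rewrite ?in_set0 ?andbF.
Qed.

Lemma elem_symS i m :
  elem_sym m.+1 = elem_sym_omit i m.+1 + lam i * elem_sym_omit i m.
Proof.
rewrite /elem_sym (bigID (fun A : {set 'I_n} => i \in A)) /= addrC.
congr (_ + _); first by apply: eq_bigl => A; rewrite andbC.
rewrite sum_card_mem_setU1 mulr_sumr; apply: eq_bigr => A /andP[iNA _].
by rewrite big_setU1.
Qed.

Lemma sum_elem_sym_omit m : \sum_j elem_sym_omit j m = (n - m)%:R * elem_sym m.
Proof.
rewrite /elem_sym_omit (exchange_big_dep (fun A : {set 'I_n} => #|A| == m)) /=;
  last by move=> j A _ /andP[].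
rewrite mulr_sumr; apply: eq_bigr => A /eqP cardA.
under eq_bigl => j do rewrite cardA eqxx andbT -in_setC.
have cardCA : #|~: A| = (n - m)%N by have := cardsC A; rewrite card_ord cardA; lia.
by rewrite sumr_const mulr_natl cardCA.
Qed.

Section NonpositiveEntry.
Variables (k : nat) (i : 'I_n).
Hypotheses (lam_Gamma : GammaPlus k lam) (lam_i_le0 : lam i <= 0).

Lemma elem_sym_omit_gt0 m : (m <= k)%N -> 0 < elem_sym_omit i m.
Proof.
elim: m => [|m IHm] mk; first by rewrite elem_sym_omit0 ltr01.
have := lam_Gamma (ltn0Sn m) mk; rewrite sigma_elem_sym (elem_symS i).
have : lam i * elem_sym_omit i m <= 0 by rewrite mulr_le0_ge0 // ltW // IHm // ltnW.
lra.
Qed.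

Lemma elem_sym_le_omit : elem_sym k <= elem_sym_omit i k.
Proof.
case: k lam_Gamma elem_sym_omit_gt0 => [|m] _ gt0; first by rewrite elem_sym0 elem_sym_omit0.
by rewrite (elem_symS i) gerDl mulr_le0_ge0 // ltW // gt0.
Qed.

End NonpositiveEntry.
End ElementarySymmetric.

Theorem mainTheorem4 (R : realFieldType) (n k : nat) (lam : 'I_n -> R) (i : 'I_n) :
  (1 <= k)%N -> (k <= n - 1)%N ->
  GammaPlus k lam -> lam i <= 0 ->
  \sum_(j < n | j != i) dsigma k j lam <= (n - k)%:R * dsigma k i lam.
Proof.
case: k => [//|k] _ kn G li.
rewrite (eq_bigr _ (fun j _ => dsigma_elem_sym_omit lam j k)) dsigma_elem_sym_omit.
have sum_omit := sum_elem_sym_omit lam k; rewrite (bigD1 i) //= in sum_omit.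
have le_omit := elem_sym_le_omit (GammaPlusW (leqnSn k) G) li.
have nk : (n - k)%:R = (n - k.+1)%:R + 1 :> R by rewrite natr1 subnSK //; lia.
rewrite nk mulrDl mul1r in sum_omit.
have := ler_wpM2l (ler0n R (n - k.+1)) le_omit.
lra.
Qed.
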